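(* Let $\alpha>0$, $\alpha\neq1$, and consider the system $$\dot u=\frac{uv}{u^2+v^2}-\alpha u,\qquad \dot v=\frac{v^2}{u^2+v^2}-\alpha v+\alpha-1 .$$ Then $$F=u^{\frac{\alpha}{1-\alpha}}\,v^{\frac{1}{\alpha-1}}\Big(\frac{u^2}{v^2}+1\Big)^{\frac{1}{2(\alpha-1)}}-\frac{\alpha\, v\ {}_2F_1\!\left(\frac12,\frac{\alpha}{2(\alpha-1)}+1;\frac32;\frac{v^2}{u^2+v^2}\right)}{(\alpha-1)\sqrt{u^2+v^2}}$$ is a first integral of this system.
   Context: ${}_2F_1(a,b;c;z)$ denotes the Gaussian hypergeometric function. The system is the special case $\alpha=\beta$ of Dixon's system $\dot u=\frac{uv}{u^2+v^2}-\alpha u$, $\dot v=\frac{v^2}{u^2+v^2}-\beta v+\beta-1$. *)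

From Stdlib Require Import Reals.
From Coquelicot Require Import Coquelicot.
Open Scope R_scope.

Fixpoint poch (a : R) (n : nat) : R :=
  match n with
  | O => 1
  | S k => poch a k * (a + INR k)
  end.

Definition hyp2F1 (a b c z : R) : R :=
  Series (fun n => poch a n * poch b n / (poch c n * INR (Factorial.fact n)) * z ^ n).

(* The vector field of the system (Dixon's system with alpha = beta). *)
Definition udot (alpha u v : R) : R := u * v / (u ^ 2 + v ^ 2) - alpha * u.
Definition vdot (alpha u v : R) : R := v ^ 2 / (u ^ 2 + v ^ 2) - alpha * v + alpha - 1.

Definition Fint (alpha u v : R) : R :=
  Rpower u (alpha / (1 - alpha)) * Rpower v (1 / (alpha - 1))
    * Rpower (u ^ 2 / v ^ 2 + 1) (1 / (2 * (alpha - 1)))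
  - alpha * v * hyp2F1 (1 / 2) (alpha / (2 * (alpha - 1)) + 1) (3 / 2)
                       (v ^ 2 / (u ^ 2 + v ^ 2))
    / ((alpha - 1) * sqrt (u ^ 2 + v ^ 2)).

(* With r^2 = u^2 + v^2 and z = v^2 / r^2, F = P - alpha/(alpha-1) H where
   P = u^(alpha/(1-alpha)) r^(1/(alpha-1)) and H = sqrt z 2F1(1/2, b; 3/2; z),
   b = alpha/(2(alpha-1)) + 1.  Along the flow u v' - v u' = (alpha-1) u and
   u u' + v v' = alpha (v - r^2), so P' = alpha P and z' = 2(alpha-1) u^2 v / r^4.
   The coefficients of 2F1(1/2, b; 3/2; z) are those of the binomial series
   (1-z)^(-b) divided by 2n+1, hence (sqrt z 2F1(1/2, b; 3/2; z))' = (1-z)^(-b) / (2 sqrt z),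
   and the chain rule gives H' = (alpha-1) P.  So F' = 0. *)

From Stdlib Require Import Reals Lra.
From Coquelicot Require Import Coquelicot.
Open Scope R_scope.

Lemma is_derive_zero_const (f : R -> R) (a b : R) :
  (forall t, a < t < b -> is_derive f t 0) ->
  forall x y, a < x < b -> a < y < b -> f x = f y.
Proof.
  intros Hf.
  assert (Hlt : forall x y, a < x < b -> a < y < b -> x < y -> f x = f y).
  { intros x y Hx Hy Hxy. apply (eq_is_derive f); [|exact Hxy].
    intros t Ht. apply Hf. lra. }
  intros x y Hx Hy. destruct (Rtotal_order x y) as [Hxy|[<-|Hyx]].
  - now apply Hlt.
  - reflexivity.
  - symmetry. now apply Hlt.
Qed.

Lemma CV_radius_le_of_Rabs_le (a c : nat -> R) :
  (forall n, Rabs (a n) <= Rabs (c n)) -> Rbar_le (CV_radius c) (CV_radius a).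
Proof.
  intros Hac. unfold CV_radius.
  destruct (Lub_Rbar_correct (CV_disk a)) as [Hub_a _].
  destruct (Lub_Rbar_correct (CV_disk c)) as [_ Hleast_c].
  apply Hleast_c. intros r Hr. apply Hub_a.
  refine (@ex_series_le R_AbsRing R_CompleteNormedModule _ _ _ Hr). intros n.
  change (norm (Rabs (a n * r ^ n))) with (Rabs (Rabs (a n * r ^ n))).
  rewrite Rabs_Rabsolu, !Rabs_mult. apply Rmult_le_compat_r; [apply Rabs_pos | apply Hac].
Qed.

Lemma Rbar_lt_CV_radius_of_ge1 (a : nat -> R) (x : R) :
  Rbar_le 1 (CV_radius a) -> Rabs x < 1 -> Rbar_lt (Rabs x) (CV_radius a).
Proof. destruct (CV_radius a) as [r| |]; simpl; intros; lra || easy. Qed.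

Lemma poch_gt0 (a : R) (n : nat) : 0 < a -> 0 < poch a n.
Proof.
  intros Ha. induction n as [|n IH]; simpl; [lra|].
  apply Rmult_lt_0_compat; [exact IH|]. pose proof (pos_INR n). lra.
Qed.

Lemma poch_Rabs_le (a A : R) (n : nat) : Rabs a <= A -> Rabs (poch a n) <= poch A n.
Proof.
  intros HA. induction n as [|n IH]; simpl; [rewrite Rabs_R1; lra|].
  rewrite Rabs_mult. apply Rmult_le_compat; try apply Rabs_pos; [exact IH|].
  eapply Rle_trans; [apply Rabs_triang|]. rewrite (Rabs_pos_eq (INR n)) by apply pos_INR. lra.
Qed.

Lemma INR_fact_gt0 (n : nat) : 0 < INR (Factorial.fact n).
Proof. apply lt_0_INR, Factorial.lt_O_fact. Qed.

Definition binom_coef (b : R) (n : nat) : R := poch b n / INR (Factorial.fact n).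

Lemma binom_coef_S (b : R) (n : nat) :
  INR (S n) * binom_coef b (S n) = (b + INR n) * binom_coef b n.
Proof.
  unfold binom_coef. simpl poch. rewrite fact_simpl, mult_INR.
  pose proof (INR_fact_gt0 n). pose proof (pos_INR n). rewrite S_INR. field. lra.
Qed.

Lemma binom_coef_gt0 (b : R) (n : nat) : 0 < b -> 0 < binom_coef b n.
Proof. intros Hb. apply Rdiv_lt_0_compat; [now apply poch_gt0 | apply INR_fact_gt0]. Qed.

Lemma CV_radius_binom_coef (b : R) : 0 < b -> CV_radius (binom_coef b) = 1.
Proof.
  intros Hb. rewrite <- Rinv_1. apply CV_radius_finite_DAlembert; [|lra|].
  - intros n. apply Rgt_not_eq, binom_coef_gt0, Hb.
  - apply is_lim_seq_ext with (fun n => 1 + (b - 1) / INR (S n)).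
    + intros n. pose proof (binom_coef_gt0 b n Hb). pose proof (pos_INR n).
      assert (HS : binom_coef b (S n) = (b + INR n) * binom_coef b n / INR (S n)).
      { rewrite <- binom_coef_S, S_INR. field. lra. }
      rewrite HS, S_INR, Rabs_pos_eq; [field; lra|].
      apply Rlt_le, Rdiv_lt_0_compat; [apply Rdiv_lt_0_compat|]; nra.
    + assert (Hinv : is_lim_seq (fun n => / INR (S n)) 0).
      { apply (is_lim_seq_inv _ p_infty); [|discriminate].
        apply (is_lim_seq_incr_1 INR), is_lim_seq_INR. }
      pose proof (is_lim_seq_plus' _ _ _ _ (is_lim_seq_const 1)
                    (is_lim_seq_scal_l _ (b - 1) 0 Hinv)) as Hlim.
      simpl in Hlim. rewrite Rmult_0_r, Rplus_0_r in Hlim. exact Hlim.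
Qed.

Lemma CV_radius_binom_coef_ge1 (b : R) : Rbar_le 1 (CV_radius (binom_coef b)).
Proof.
  pose proof (Rabs_pos b).
  (* Dominate by |b| + 1 rather than |b|: the ratio test needs nonzero coefficients. *)
  rewrite <- (CV_radius_binom_coef (Rabs b + 1)) by lra.
  apply CV_radius_le_of_Rabs_le. intros n.
  assert (Hfact : 0 < / INR (Factorial.fact n)) by apply Rinv_0_lt_compat, INR_fact_gt0.
  unfold binom_coef, Rdiv. rewrite !Rabs_mult, (Rabs_pos_eq (/ INR (Factorial.fact n)))
    by exact (Rlt_le _ _ Hfact).
  apply Rmult_le_compat_r; [lra|].
  rewrite (Rabs_pos_eq (poch (Rabs b + 1) n)) by (apply Rlt_le, poch_gt0; lra).
  apply poch_Rabs_le. lra.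
Qed.

Lemma binom_series_ode (b z : R) : Rabs z < 1 ->
  (1 - z) * PSeries (PS_derive (binom_coef b)) z = b * PSeries (binom_coef b) z.
Proof.
  intros Hz.
  assert (Hd : ex_pseries (PS_derive (binom_coef b)) z).
  { apply ex_pseries_derive, Rbar_lt_CV_radius_of_ge1;
      [apply CV_radius_binom_coef_ge1 | exact Hz]. }
  rewrite Rmult_minus_distr_r, Rmult_1_l, <- PSeries_incr_1, <- PSeries_minus;
    [|exact Hd|apply ex_pseries_incr_1, Hd].
  rewrite <- PSeries_scal. apply PSeries_ext. intros n.
  unfold PS_minus, PS_scal, PS_derive, PS_incr_1, PS_opp, PS_plus.
  destruct n as [|n].
  - unfold binom_coef, plus, opp, scal, zero; simpl; unfold mult; simpl. field.
  - rewrite (binom_coef_S b (S n)), S_INR.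
    unfold plus, opp, scal; simpl; unfold mult; simpl. ring.
Qed.

Lemma binom_series (b z : R) : -1 < z < 1 ->
  PSeries (binom_coef b) z = Rpower (1 - z) (- b).
Proof.
  intros Hz.
  set (K := fun x => Rpower (1 - x) b * PSeries (binom_coef b) x).
  assert (HK : forall x, -1 < x < 1 -> is_derive K x 0).
  { intros x Hx. assert (Hr : Rabs x < 1) by (apply Rabs_def1; lra).
    assert (Hrad := Rbar_lt_CV_radius_of_ge1 _ _ (CV_radius_binom_coef_ge1 b) Hr).
    unfold K, Rpower. auto_derive.
    - split; [lra|]. split; [apply ex_derive_PSeries, Hrad|exact I].
    - rewrite Derive_PSeries by exact Hrad.
      replace (PSeries (PS_derive (binom_coef b)) x)
        with (b * PSeries (binom_coef b) x / (1 - x))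
        by (rewrite <- (binom_series_ode b x Hr); field; lra).
      field. lra. }
  assert (HKz : K z = K 0) by (apply (is_derive_zero_const K (-1) 1); [exact HK|lra|lra]).
  unfold K in HKz. rewrite PSeries_0, Rminus_0_r in HKz.
  replace (Rpower 1 b * binom_coef b 0) with 1 in HKz
    by (unfold Rpower, binom_coef; rewrite ln_1, Rmult_0_r, exp_0; simpl; field).
  assert (Hpos : 0 < Rpower (1 - z) b) by apply exp_pos.
  rewrite Rpower_Ropp. apply (Rmult_eq_reg_l (Rpower (1 - z) b)); [|lra].
  rewrite HKz. field. lra.
Qed.

Definition hyp2F1_coef (a b c : R) (n : nat) : R :=
  poch a n * poch b n / (poch c n * INR (Factorial.fact n)).

Lemma hyp2F1_PSeries (a b c z : R) : hyp2F1 a b c z = PSeries (hyp2F1_coef a b c) z.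
Proof. reflexivity. Qed.

Lemma poch_three_halves (n : nat) : poch (3 / 2) n = (2 * INR n + 1) * poch (1 / 2) n.
Proof.
  induction n as [|n IH]; simpl poch; [simpl; lra|].
  rewrite IH, S_INR. field.
Qed.

Section HalfThreeHalves.

Variable b : R.

Let h := hyp2F1_coef (1 / 2) b (3 / 2).

Lemma hyp2F1_coef_half (n : nat) : (2 * INR n + 1) * h n = binom_coef b n.
Proof.
  unfold h, hyp2F1_coef, binom_coef. rewrite poch_three_halves.
  pose proof (INR_fact_gt0 n). pose proof (pos_INR n).
  assert (0 < poch (1 / 2) n) by (apply poch_gt0; lra).
  field. repeat split; lra.
Qed.

Lemma CV_radius_hyp2F1_half_ge1 : Rbar_le 1 (CV_radius h).
Proof.
  apply (Rbar_le_trans _ (CV_radius (binom_coef b))); [apply CV_radius_binom_coef_ge1|].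
  apply CV_radius_le_of_Rabs_le. intros n. pose proof (pos_INR n).
  rewrite <- hyp2F1_coef_half, Rabs_mult, (Rabs_pos_eq (2 * INR n + 1)) by lra.
  pose proof (Rabs_pos (h n)). nra.
Qed.

Lemma hyp2F1_half_euler (z : R) : Rabs z < 1 ->
  PSeries h z + 2 * (z * PSeries (PS_derive h) z) = PSeries (binom_coef b) z.
Proof.
  intros Hz.
  assert (Hrad := Rbar_lt_CV_radius_of_ge1 _ _ CV_radius_hyp2F1_half_ge1 Hz).
  assert (Hd : ex_pseries (PS_derive h) z) by now apply ex_pseries_derive.
  rewrite <- PSeries_incr_1, <- PSeries_scal, <- PSeries_plus;
    [| now apply CV_radius_inside | apply ex_pseries_scal, ex_pseries_incr_1, Hd;
       apply Rmult_comm].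
  apply PSeries_ext. intros n. unfold PS_plus, PS_scal, PS_incr_1, PS_derive.
  rewrite <- hyp2F1_coef_half.
  destruct n as [|n]; unfold plus, scal, zero; simpl; unfold mult; simpl; [ring|].
  rewrite <- S_INR. ring.
Qed.

Lemma is_derive_sqrt_mul_hyp2F1_half (z : R) : 0 < z < 1 ->
  is_derive (fun x => sqrt x * hyp2F1 (1 / 2) b (3 / 2) x) z
    (Rpower (1 - z) (- b) / (2 * sqrt z)).
Proof.
  intros Hz. assert (Hr : Rabs z < 1) by (rewrite Rabs_pos_eq; lra).
  assert (Hrad := Rbar_lt_CV_radius_of_ge1 _ _ CV_radius_hyp2F1_half_ge1 Hr).
  apply (is_derive_ext (fun x => sqrt x * PSeries h x));
    [intros x; now rewrite hyp2F1_PSeries|].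
  auto_derive.
  - split; [lra|]. split; [now apply ex_derive_PSeries|exact I].
  - rewrite Derive_PSeries by exact Hrad.
    rewrite <- binom_series, <- (hyp2F1_half_euler z Hr) by lra.
    assert (Hsqrt : sqrt z * sqrt z = z) by (apply sqrt_sqrt; lra).
    pose proof (sqrt_lt_R0 z ltac:(lra)).
    set (s := sqrt z) in *. rewrite <- Hsqrt. field. lra.
Qed.

End HalfThreeHalves.

Section FirstIntegral.

Variable alpha : R.
Hypothesis Halpha1 : alpha <> 1.

Definition Fint_power (U V : R) : R :=
  Rpower U (alpha / (1 - alpha)) * Rpower (U ^ 2 + V ^ 2) (1 / (2 * (alpha - 1))).

Definition Fint_hyp (U V : R) : R :=
  sqrt (V ^ 2 / (U ^ 2 + V ^ 2))
  * hyp2F1 (1 / 2) (alpha / (2 * (alpha - 1)) + 1) (3 / 2) (V ^ 2 / (U ^ 2 + V ^ 2)).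

Lemma Fint_eq_power_hyp (U V : R) : 0 < U -> 0 < V ->
  Fint alpha U V = Fint_power U V - alpha / (alpha - 1) * Fint_hyp U V.
Proof.
  intros HU HV. assert (Hr : 0 < U ^ 2 + V ^ 2) by nra.
  assert (Ha1 : alpha - 1 <> 0) by lra.
  unfold Fint, Fint_power, Fint_hyp. f_equal.
  - rewrite Rmult_assoc. f_equal.
    replace (U ^ 2 + V ^ 2) with (V ^ 2 * (U ^ 2 / V ^ 2 + 1)) by (field; lra).
    assert (HV2 : 0 < V ^ 2) by (apply pow_lt; exact HV).
    assert (HUV : 0 < U ^ 2 / V ^ 2 + 1)
      by (pose proof (Rdiv_le_0_compat _ _ (pow2_ge_0 U) HV2); lra).
    rewrite <- Rpower_mult_distr by assumption.
    f_equal. unfold Rpower. rewrite ln_pow by exact HV. f_equal. simpl. field. exact Ha1.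
  - rewrite sqrt_div, sqrt_pow2 by (try apply pow2_ge_0; lra).
    pose proof (sqrt_lt_R0 _ Hr). field. lra.
Qed.

Lemma Fint_power_eq_cos2 (U V : R) : 0 < U -> 0 < V ->
  Fint_power U V =
  Rpower (U ^ 2 / (U ^ 2 + V ^ 2)) (- (alpha / (2 * (alpha - 1)) + 1))
  * U ^ 2 * sqrt (U ^ 2 + V ^ 2) / (U ^ 2 + V ^ 2) ^ 2.
Proof.
  intros HU HV. assert (Hr : 0 < U ^ 2 + V ^ 2) by nra.
  assert (HU2 : 0 < U ^ 2) by nra.
  assert (Ha1 : alpha - 1 <> 0) by lra.
  assert (Hpow : forall x y, 0 < Rpower x y) by (intros; apply exp_pos).
  unfold Fint_power. rewrite <- Rpower_sqrt by exact Hr.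
  apply ln_inv.
  - apply Rmult_lt_0_compat; apply Hpow.
  - apply Rdiv_lt_0_compat; [|now apply pow_lt].
    apply Rmult_lt_0_compat; [apply Rmult_lt_0_compat|]; auto.
  - rewrite ln_div, ln_mult, ln_mult, ln_mult, !ln_Rpower
      by auto using Rmult_lt_0_compat, pow_lt.
    rewrite ln_div, !ln_pow by assumption.
    simpl INR. field. lra.
Qed.

Section AlongSolution.

Variables (u v : R -> R) (t : R).
Hypothesis Hu : 0 < u t.
Hypothesis Hv : 0 < v t.
Hypothesis Du : is_derive u t (udot alpha (u t) (v t)).
Hypothesis Dv : is_derive v t (vdot alpha (u t) (v t)).

Lemma Derive_u_along : Derive (fun s => u s) t = udot alpha (u t) (v t).
Proof. now apply is_derive_unique. Qed.

Lemma Derive_v_along : Derive (fun s => v s) t = vdot alpha (u t) (v t).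
Proof. now apply is_derive_unique. Qed.

Lemma is_derive_sin2_along :
  is_derive (fun s => v s ^ 2 / (u s ^ 2 + v s ^ 2)) t
    (2 * (alpha - 1) * u t ^ 2 * v t / (u t ^ 2 + v t ^ 2) ^ 2).
Proof.
  assert (Hr : 0 < u t ^ 2 + v t ^ 2) by nra.
  auto_derive.
  - repeat split; try (eexists; eassumption). nra.
  - rewrite Derive_u_along, Derive_v_along.
    unfold udot, vdot. field. nra.
Qed.

Lemma is_derive_Fint_power_along :
  is_derive (fun s => Fint_power (u s) (v s)) t (alpha * Fint_power (u t) (v t)).
Proof.
  assert (Hr : 0 < u t ^ 2 + v t ^ 2) by nra.
  unfold Fint_power, Rpower. auto_derive.
  - repeat split; try (eexists; eassumption); nra.
  - rewrite Derive_u_along, Derive_v_along.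
    replace (u t * (u t * 1) + v t * (v t * 1)) with (u t ^ 2 + v t ^ 2) by ring.
    unfold udot, vdot. field. repeat split; nra || lra.
Qed.

Lemma is_derive_Fint_hyp_along :
  is_derive (fun s => Fint_hyp (u s) (v s)) t ((alpha - 1) * Fint_power (u t) (v t)).
Proof.
  set (U := u t) in *. set (V := v t) in *.
  assert (Hr : 0 < U ^ 2 + V ^ 2) by nra.
  assert (Hz : 0 < V ^ 2 / (U ^ 2 + V ^ 2) < 1).
  { split; [apply Rdiv_lt_0_compat; nra|].
    apply (Rmult_lt_reg_r (U ^ 2 + V ^ 2)); [exact Hr|]. field_simplify; nra. }
  pose proof (is_derive_comp
    (fun x => sqrt x * hyp2F1 (1 / 2) (alpha / (2 * (alpha - 1)) + 1) (3 / 2) x)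
    (fun s => v s ^ 2 / (u s ^ 2 + v s ^ 2)) t _ _
    (is_derive_sqrt_mul_hyp2F1_half (alpha / (2 * (alpha - 1)) + 1) _ Hz)
    is_derive_sin2_along) as Hcomp.
  replace ((alpha - 1) * Fint_power U V) with
    (2 * (alpha - 1) * U ^ 2 * V / (U ^ 2 + V ^ 2) ^ 2
     * (Rpower (1 - V ^ 2 / (U ^ 2 + V ^ 2)) (- (alpha / (2 * (alpha - 1)) + 1))
        / (2 * sqrt (V ^ 2 / (U ^ 2 + V ^ 2))))); [exact Hcomp|].
  rewrite Fint_power_eq_cos2 by assumption.
  replace (1 - V ^ 2 / (U ^ 2 + V ^ 2)) with (U ^ 2 / (U ^ 2 + V ^ 2)) by (field; lra).
  rewrite sqrt_div, sqrt_pow2 by (try apply pow2_ge_0; lra).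
  pose proof (sqrt_lt_R0 _ Hr).
  field. repeat split; lra.
Qed.

Lemma is_derive_Fint_power_hyp_along :
  is_derive (fun s => Fint_power (u s) (v s) - alpha / (alpha - 1) * Fint_hyp (u s) (v s))
    t 0.
Proof.
  pose proof (is_derive_minus _ _ t _ _ is_derive_Fint_power_along
    (is_derive_scal _ t (alpha / (alpha - 1)) _ is_derive_Fint_hyp_along)) as Hd.
  replace 0 with (alpha * Fint_power (u t) (v t)
                  - alpha / (alpha - 1) * ((alpha - 1) * Fint_power (u t) (v t)))
    by (field; lra).
  exact Hd.
Qed.

End AlongSolution.

End FirstIntegral.

Theorem mainTheorem3 (alpha : R) (Halpha : 0 < alpha) (Halpha1 : alpha <> 1)
  (u v : R -> R) (a b : R) :
  (forall t, a < t < b ->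
     0 < u t /\ 0 < v t /\
     is_derive u t (udot alpha (u t) (v t)) /\
     is_derive v t (vdot alpha (u t) (v t))) ->
  forall t s, a < t < b -> a < s < b ->
    Fint alpha (u t) (v t) = Fint alpha (u s) (v s).
Proof.
  intros Hsol t s Ht Hs.
  destruct (Hsol t Ht) as (Hut & Hvt & _). destruct (Hsol s Hs) as (Hus & Hvs & _).
  rewrite !(Fint_eq_power_hyp alpha Halpha1) by assumption.
  apply (is_derive_zero_const
           (fun r => Fint_power alpha (u r) (v r)
                     - alpha / (alpha - 1) * Fint_hyp alpha (u r) (v r)) a b);
    [|assumption..].
  intros r Hr. destruct (Hsol r Hr) as (Hur & Hvr & Dur & Dvr).
  now apply is_derive_Fint_power_hyp_along.
Qed.
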